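(* Let $\pi$ be a $2$-sortable permutation. Then there exists a sequence of legal operations of the $\mathfrak{D}^2\mathfrak{I}$ machine that sorts $\pi$ and in which every occurrence of $d_0$ (resp. $d_1$, $d_2$) is performed in a configuration where condition ($\gamma$) (resp. ($\beta$), ($\alpha$)) holds.
   Context: The $\mathfrak{D}^2\mathfrak{I}$ machine consists of two decreasing stacks $D_1,D_2$ followed in series by an increasing stack $I$. Elements of $D_1,D_2$ must be in decreasing order from top to bottom (top largest); elements of $I$ in increasing order from top to bottom (top smallest). Operations: $d_0$ pushes the next input element (called $Input$) into $D_1$; $d_1$ moves $Top(D_1)$ to $D_2$; $d_2$ moves $Top(D_2)$ to $I$; $d_3$ pops $Top(I)$ and appends it to the output. An operation is legal if it respects the stack restrictions. A permutation is $2$-sortable if some sequence of legal operations outputs its elements in increasing order. Any comparison involving an empty stack is considered true. Conditions: ($\alpha$) $Top(D_2)<Top(I)$; ($\beta$) $Top(D_2)<Top(D_1)$ and $Top(D_1)<Top(I)$; ($\gamma$) $Top(D_1)<Input$, $Input<Top(I)$, and the sequence of input elements from $Input$ up to the first input element larger than $Top(D_2)$ is increasing. *)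

(* Model of the D^2 I machine (two decreasing stacks D1, D2
   in series followed by an increasing stack I). *)
From mathcomp Require Import all_boot.
Set Implicit Arguments. Unset Strict Implicit. Unset Printing Implicit Defensive.

(* Stacks are lists with the top at the head. *)
Record config := Config {
  input : seq nat;   (* remaining input, next element first *)
  D1 : seq nat;
  D2 : seq nat;
  I  : seq nat;
  output : seq nat
}.

Inductive op := d0 | d1 | d2 | d3.

(* Comparison x < y where an empty stack (None) makes the comparison true. *)
Definition olt (x y : option nat) : bool :=
  match x, y with Some a, Some b => a < b | _, _ => true end.

Definition top (s : seq nat) : option nat := ohead s.

Definition step (o : op) (c : config) : option config :=
  match o with
  | d0 =>
    if input c is x :: rest then
      if olt (top (D1 c)) (Some x)
      then Some (Config rest (x :: D1 c) (D2 c) (I c) (output c)) else None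
    else None
  | d1 =>
    if D1 c is x :: rest then
      if olt (top (D2 c)) (Some x)
      then Some (Config (input c) rest (x :: D2 c) (I c) (output c)) else None
    else None
  | d2 =>
    if D2 c is x :: rest then
      if olt (Some x) (top (I c))
      then Some (Config (input c) (D1 c) rest (x :: I c) (output c)) else None
    else None
  | d3 =>
    if I c is x :: rest then
      Some (Config (input c) (D1 c) (D2 c) rest (rcons (output c) x))
    else None
  end.

Fixpoint run (ops : seq op) (c : config) : option config :=
  match ops with
  | [::] => Some c
  | o :: ops' => if step o c is Some c' then run ops' c' else None
  end.

Definition init (p : seq nat) : config := Config p [::] [::] [::] [::].

Definition is_perm (p : seq nat) : Prop := perm_eq p (iota 1 (size p)).

Definition sorts (ops : seq op) (p : seq nat) : Prop :=
  run ops (init p) = Some (Config [::] [::] [::] [::] (iota 1 (size p))).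

Definition two_sortable (p : seq nat) : Prop := exists ops, sorts ops p.

Definition cond_alpha (c : config) : bool := olt (top (D2 c)) (top (I c)).

Definition cond_beta (c : config) : bool :=
  olt (top (D2 c)) (top (D1 c)) && olt (top (D1 c)) (top (I c)).

(* Condition (gamma): Top(D1) < Input, Input < Top(I), and the input
   sequence from Input up to (and including) the first input element larger
   than Top(D2) is increasing (up to the end of the input if there is no such
   element; if D2 is empty this segment is just [Input]). *)
Definition cond_gamma (c : config) : bool :=
  let inp := input c in
  let k := find (fun x => olt (top (D2 c)) (Some x)) inp in
  [&& olt (top (D1 c)) (top inp), olt (top inp) (top (I c))
    & sorted ltn (take k.+1 inp)].

Definition cond_of (o : op) (c : config) : bool :=
  match o with
  | d0 => cond_gamma c
  | d1 => cond_beta c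
  | d2 => cond_alpha c
  | d3 => true
  end.

Fixpoint run_respects (ops : seq op) (c : config) : bool :=
  match ops with
  | [::] => true
  | o :: ops' =>
    cond_of o c && (if step o c is Some c' then run_respects ops' c' else true)
  end.

(* A sorting run can be rebuilt from the front, one operation at a time.
   If the first operation violates its condition, the rest of the run is
   first normalized recursively and then inspected.  A [d1] violating (beta)
   leaves Top(D2) >= Top(I), so no condition-respecting [d1] or [d2] can
   follow before a [d3]; that [d3] commutes with the preceding [d0]s and the
   [d1] and can be done first.  A [d0] violating (gamma) cannot be followed by
   a [d0] satisfying (gamma) nor by a [d1] satisfying (beta), and it commutes
   with a following [d2] or [d3].  Every rerouting starts with a legal
   operation satisfying its condition, and the recursion terminates because
   each operation decreases the total distance of the elements to the output.
   Nothing depends on the run being a sorting one, or on [p] being a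
   permutation: any run that empties the machine can be normalized. *)
From mathcomp Require Import all_boot.
From mathcomp Require Import zify.
Set Implicit Arguments. Unset Strict Implicit.

Definition final (out : seq nat) : config := Config [::] [::] [::] [::] out.

Lemma run_cons (o : op) (w : seq op) (c : config) :
  run (o :: w) c = if step o c is Some c' then run w c' else None.
Proof. by []. Qed.

Lemma run_cat (w w' : seq op) (c : config) :
  run (w ++ w') c = if run w c is Some c' then run w' c' else None.
Proof. by elim: w c => [|o w IHw] c //=; case: (step o c). Qed.

Definition potential (c : config) : nat :=
  4 * size (input c) + 3 * size (D1 c) + 2 * size (D2 c) + size (I c).

Lemma potential_step (o : op) (c c' : config) :
  step o c = Some c' -> potential c = (potential c').+1.
Proof.
case: c => [inp l1 l2 i out]; case: o => /=.
- by case: inp => [|z r] //; case: ifP => // _ [<-]; rewrite /potential /=; lia.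
- by case: l1 => [|z r] //; case: ifP => // _ [<-]; rewrite /potential /=; lia.
- by case: l2 => [|z r] //; case: ifP => // _ [<-]; rewrite /potential /=; lia.
- by case: i => [|z r] // [<-]; rewrite /potential /=; lia.
Qed.

(* The operations that touch neither I nor the output. *)
Definition upstream (o : op) : bool :=
  match o with d0 | d1 => true | d2 | d3 => false end.

Lemma step_d3_comm (o : op) (c c1 c2 : config) :
  upstream o -> step o c = Some c1 -> step d3 c1 = Some c2 ->
  exists c', step d3 c = Some c' /\ step o c' = Some c2.
Proof.
case: c => [inp l1 l2 i out]; case: o => //= _.
- case: inp => [|z r] //; case: ifP => // lt_z [<-] /=.
  by case: i => [|y i] // [<-]; exists (Config (z :: r) l1 l2 i (rcons out y)); rewrite /= lt_z.
- case: l1 => [|z r] //; case: ifP => // lt_z [<-] /=.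
  by case: i => [|y i] // [<-]; exists (Config inp (z :: r) l2 i (rcons out y)); rewrite /= lt_z.
Qed.

Lemma run_d3_comm (w : seq op) (c c1 c2 : config) :
  all upstream w -> run w c = Some c1 -> step d3 c1 = Some c2 ->
  exists c', step d3 c = Some c' /\ run w c' = Some c2.
Proof.
elim: w c => [|o w IHw] c /=; first by move=> _ [->]; exists c2.
move=> /andP[up_o up_w]; case step_o: (step o c) => [c0|] // run_w d3_c1.
have [c0' [d3_c0 run_w']] := IHw c0 up_w run_w d3_c1.
have [c' [d3_c step_o']] := step_d3_comm up_o step_o d3_c0.
by exists c'; rewrite step_o'.
Qed.

Lemma step_d0_d2_comm (c c1 c2 : config) :
  step d0 c = Some c1 -> step d2 c1 = Some c2 ->
  exists c', step d2 c = Some c' /\ step d0 c' = Some c2.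
Proof.
case: c => [inp l1 l2 i out] /=.
case: inp => [|z r] //; case: ifP => // lt_z [<-] /=.
case: l2 => [|x l2] //; case: ifP => // lt_x [<-].
by exists (Config (z :: r) l1 l2 (x :: i) out); split; rewrite /= ?lt_x ?lt_z.
Qed.

Lemma step_d2_alpha (c c' : config) : step d2 c = Some c' -> cond_alpha c.
Proof. by case: c => [inp l1 [|x l2] i out] //=; case: ifP. Qed.

Lemma step_d0_alpha (c c' : config) :
  step d0 c = Some c' -> cond_alpha c' = cond_alpha c.
Proof. by case: c => [[|z r] l1 l2 i out] //=; case: ifP => // _ [<-]. Qed.

Lemma step_d1_beta_alpha (c c' : config) :
  step d1 c = Some c' -> cond_beta c -> cond_alpha c.
Proof.
case: c => [inp [|z l1] l2 i out] //= _.
rewrite /cond_beta /cond_alpha /=.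
by case: l2 i => [|x l2] [|y i] //= /andP[]; apply: ltn_trans.
Qed.

Lemma step_d1_not_beta (c c' : config) :
  step d1 c = Some c' -> ~~ cond_beta c -> ~~ cond_alpha c'.
Proof.
case: c => [inp [|z l1] l2 i out] //=; case: ifP => // lt_z [<-].
by rewrite /cond_beta /cond_alpha /= lt_z.
Qed.

Lemma step_d0_beta_gamma (c c' : config) :
  step d0 c = Some c' -> cond_beta c' -> cond_gamma c.
Proof.
case: c => [[|z r] l1 l2 i out] //=; case: ifP => // lt_z [<-].
rewrite /cond_beta /cond_gamma /= => /andP[lt_l2z lt_zi].
by rewrite lt_z lt_zi lt_l2z /= take0.
Qed.

(* The (gamma) segment of [c] extends that of [c1] by the pushed element,
   which is smaller than the next input element since that one is pushed too. *)
Lemma step_d0_d0_gamma (c c1 c2 : config) :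
  step d0 c = Some c1 -> step d0 c1 = Some c2 -> cond_gamma c1 -> cond_gamma c.
Proof.
case: c => [[|z r] l1 l2 i out] //=; case: ifP => // lt_z [<-] /=.
case: r => [|z' r] //; case: ifP => // lt_zz' _.
rewrite /cond_gamma /= => /and3P[_ lt_z'i sorted_seg].
rewrite lt_z /=; apply/andP; split.
  by case: i lt_z'i => [|y i] //=; apply: ltn_trans.
by case: (olt (top l2) (Some z)) => //=; rewrite lt_zz'.
Qed.

Section Rerouting.

Variable out : seq nat.

Lemma respecting_run_not_alpha (R : seq op) (c : config) :
  ~~ cond_alpha c -> run R c = Some (final out) -> run_respects R c ->
  exists k R', R = nseq k d0 ++ d3 :: R'.
Proof.
elim: R c => [|o R IHR] c not_alpha /=; first by move=> [c_final]; rewrite c_final in not_alpha.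
case step_o: (step o c) => [c1|] // run_R /andP[cond_o resp_R].
case: o step_o cond_o => step_o cond_o.
- rewrite -(step_d0_alpha step_o) in not_alpha.
  have [k [R' ->]] := IHR c1 not_alpha run_R resp_R.
  by exists k.+1, R'.
- by rewrite (step_d1_beta_alpha step_o cond_o) in not_alpha.
- by case/negP: not_alpha.
- by exists 0, R.
Qed.

Definition reroutable (c : config) : Prop :=
  exists o c' S, [/\ step o c = Some c', cond_of o c & run S c' = Some (final out)].

Lemma reroute_d0 (c c1 : config) (R : seq op) :
  step d0 c = Some c1 -> ~~ cond_gamma c ->
  run R c1 = Some (final out) -> run_respects R c1 -> reroutable c.
Proof.
move=> step_c not_gamma.
case: R => [|o R] /=.
  move=> [c1_final]; move: step_c; rewrite c1_final.
  by case: c {not_gamma} => [[|z r] l1 l2 i o'] //=; case: ifP.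
case step_o: (step o c1) => [c2|] // run_R /andP[cond_o _].
case: o step_o cond_o => step_o cond_o.
- by rewrite (step_d0_d0_gamma step_c step_o cond_o) in not_gamma.
- by rewrite (step_d0_beta_gamma step_c cond_o) in not_gamma.
- have [c' [step_c' step_c'']] := step_d0_d2_comm step_c step_o.
  exists d2, c', (d0 :: R); split=> //; first exact: step_d2_alpha step_c'.
  by rewrite run_cons step_c''.
- have [c' [step_c' step_c'']] := step_d3_comm (o := d0) isT step_c step_o.
  by exists d3, c', (d0 :: R); split=> //; rewrite run_cons step_c''.
Qed.

Lemma reroute_d1 (c c1 : config) (R : seq op) :
  step d1 c = Some c1 -> ~~ cond_beta c ->
  run R c1 = Some (final out) -> run_respects R c1 -> reroutable c.
Proof.
move=> step_c not_beta run_R resp_R.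
have [k [R' defR]] := respecting_run_not_alpha (step_d1_not_beta step_c not_beta) run_R resp_R.
move: run_R; rewrite defR run_cat.
case run_k: (run (nseq k d0) c1) => [c3|] //; rewrite run_cons.
case step_c3: (step d3 c3) => [c4|] // run_R'.
have run_w : run (d1 :: nseq k d0) c = Some c3 by rewrite run_cons step_c.
have up_w : all upstream (d1 :: nseq k d0) by rewrite /= all_nseq orbT.
have [c' [step_c' run_c']] := run_d3_comm up_w run_w step_c3.
by exists d3, c', (d1 :: nseq k d0 ++ R'); split=> //; rewrite -cat_cons run_cat run_c'.
Qed.

Lemma reroute (o : op) (c c1 : config) (R : seq op) :
  step o c = Some c1 -> ~~ cond_of o c ->
  run R c1 = Some (final out) -> run_respects R c1 -> reroutable c.
Proof.
case: o => step_c /= not_cond.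
- exact: reroute_d0 step_c not_cond.
- exact: reroute_d1 step_c not_cond.
- by rewrite (step_d2_alpha step_c) in not_cond.
- by [].
Qed.

Lemma respecting_run (S : seq op) (c : config) :
  run S c = Some (final out) -> exists R, run R c = Some (final out) /\ run_respects R c.
Proof.
have [n lt_cn] := ubnP (potential c).
elim: n c lt_cn S => // n IHn c lt_cn [|o S] /=; first by move=> run_nil; exists [::].
have IHc o' c' S' : step o' c = Some c' -> run S' c' = Some (final out) ->
    exists R, run R c' = Some (final out) /\ run_respects R c'.
  by move=> /potential_step pot_c; apply: IHn; rewrite -ltnS -pot_c.
case step_o: (step o c) => [c1|] // run_S.
have [R1 [run_R1 resp_R1]] := IHc _ _ _ step_o run_S.
case cond_o: (cond_of o c); first by exists (o :: R1); rewrite /= step_o cond_o.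
have [o' [c' [S' [step_c' cond_c' run_S']]]] := reroute step_o (negbT cond_o) run_R1 resp_R1.
have [R' [run_R' resp_R']] := IHc _ _ _ step_c' run_S'.
by exists (o' :: R'); rewrite /= step_c' cond_c'.
Qed.

End Rerouting.

Theorem mainTheorem9 (p : seq nat) :
  is_perm p -> two_sortable p ->
  exists ops : seq op, sorts ops p /\ run_respects ops (init p).
Proof. by move=> _ [ops sorts_ops]; exact: respecting_run sorts_ops. Qed.
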